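(* Let $\{\mathbf{Y}_n\}_{n\ge1}$ be a pMAX random field (defined in the context). Let $n\ge 1$, $r\ge 0$ and $x,x'\in\mathbb{R}^2$, and assume the tail dependence coefficients appearing below exist. (a) If $r>0$, then $$\lambda(Y_{n+r}(x')\mid Y_n(x))=\begin{cases}0, & \alpha(x)<1,\\[2pt] \tfrac12\,\lambda(X_{n+r}(x')\mid X_n(x)), & \alpha(x)=1,\\[2pt] \lambda(X_{n+r}(x')\mid X_n(x)), & \alpha(x)>1.\end{cases}$$ (b) If $r=0$ and $x\neq x'$, then $$\lambda(Y_{n}(x')\mid Y_n(x))=\begin{cases}\lambda\big(Z_n(x')^{1/\alpha(x')}\mid Z_n(x)^{1/\alpha(x)}\big), & \alpha(x)<1,\\[2pt] \tfrac12\Big(\lambda(X_{n}(x')\mid X_n(x))+\lambda\big(Z_n(x')^{1/\alpha(x')}\mid Z_n(x)^{1/\alpha(x)}\big)\Big), & \alpha(x)=1,\\[2pt] \lambda(X_{n}(x')\mid X_n(x)), & \alpha(x)>1.\end{cases}$$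
   Context: A random variable has the standard (unit) Fréchet distribution if $P(\cdot\le z)=e^{-1/z}$ for $z>0$. A pMAX random field is a sequence $\{\mathbf{Y}_n\}_{n\ge1}=\{Y_n(x):x\in\mathbb{R}^2\}_{n\ge1}$ with $Y_n(x)=X_n(x)\vee Z_n(x)^{1/\alpha(x)}$, where: (i) $\{\mathbf{X}_n\}_{n\ge1}=\{X_n(x):x\in\mathbb{R}^2\}_{n\ge1}$ is a stationary sequence of random fields with standard Fréchet marginals; (ii) $\{\mathbf{Z}_n\}_{n\ge1}=\{Z_n(x):x\in\mathbb{R}^2\}_{n\ge1}$ is a sequence of i.i.d. random fields with standard Fréchet marginals, independent of $\{\mathbf{X}_n\}$; (iii) $\alpha:\mathbb{R}^2\to(0,\infty)$ is a function. Here $a\vee b=\max(a,b)$. For random variables $U,V$, the (upper) tail dependence coefficient is $\lambda(V\mid U)=\lim_{y\to\infty}P(V>y\mid U>y)$. *)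

From HB Require Import structures.
From mathcomp Require Import all_boot all_order all_algebra.
From mathcomp Require Import all_classical all_reals all_analysis.
Set Implicit Arguments. Unset Strict Implicit. Unset Printing Implicit Defensive.
Import Order.TTheory GRing.Theory Num.Theory.
Import numFieldNormedType.Exports.
Local Open Scope classical_set_scope.
Local Open Scope ring_scope.

Section Defs.
Context {d : measure_display} {T : measurableType d} {R : realType}.
Variable P : probability T R.

Definition R2 := (R * R)%type.

(* A finite-dimensional ("cylinder") event of a family of real random
   variables F indexed by I: the intersection of the events F i ∈ B over a
   finite list of (index, Borel set) pairs. *)
Definition cyl (I : Type) (F : I -> T -> R) (s : seq (I * set R)) : set T :=
  foldr (fun p A => (F p.1 @^-1` p.2) `&` A) setT s.

Definition meas_list (I : Type) (s : seq (I * set R)) : Prop :=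
  foldr (fun p Q => measurable p.2 /\ Q) True s.

Definition pos_idx (A : Type) (s : seq ((nat * A) * set R)) : Prop :=
  foldr (fun p Q => (0 < p.1.1)%N /\ Q) True s.

Definition fam (F : nat -> R2 -> T -> R) : (nat * R2) -> T -> R :=
  fun i => F i.1 i.2.

Definition shift (F : nat -> R2 -> T -> R) (k : nat) : nat -> R2 -> T -> R :=
  fun n => F (n + k)%N.

Definition frechet_marginals (F : nat -> R2 -> T -> R) : Prop :=
  forall n x z, (0 < n)%N -> 0 < z ->
    P [set t | F n x t <= z] = (expR (- z^-1))%:E.

Definition stationary_seq (F : nat -> R2 -> T -> R) : Prop :=
  forall (k : nat) (s : seq ((nat * R2) * set R)), meas_list s -> pos_idx s ->
    P (cyl (fam (shift F k)) s) = P (cyl (fam F) s).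

Definition indep_families (J : eqType) (I : Type) (Jok : J -> Prop)
  (Iok : seq (I * set R) -> Prop) (F : J -> I -> T -> R) : Prop :=
  forall (js : seq J) (ss : J -> seq (I * set R)),
    uniq js ->
    (forall j, j \in js -> Jok j /\ meas_list (ss j) /\ Iok (ss j)) ->
    P (foldr (fun j A => cyl (F j) (ss j) `&` A) setT js)
    = foldr (fun j a => (P (cyl (F j) (ss j)) * a)%E) 1%E js.

Definition iid_fields (F : nat -> R2 -> T -> R) : Prop :=
  indep_families (fun n => (0 < n)%N) (fun _ => True) F /\
  forall (n m : nat) (s : seq (R2 * set R)), (0 < n)%N -> (0 < m)%N ->
    meas_list s -> P (cyl (F n) s) = P (cyl (F m) s).

Definition indep_seqs (F G : nat -> R2 -> T -> R) : Prop :=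
  indep_families (fun _ => True) (@pos_idx R2)
    (fun b : bool => if b then fam F else fam G).

Definition tail_ratio (U V : T -> R) (y : R) : R :=
  fine (P ([set t | V t > y] `&` [set t | U t > y])) / fine (P [set t | U t > y]).

Definition tdc_exists (U V : T -> R) : Prop :=
  cvg (tail_ratio U V y @[y --> +oo]).

Definition tdc (U V : T -> R) : R := lim (tail_ratio U V y @[y --> +oo]).

Definition pmax (X Z : nat -> R2 -> T -> R) (alpha : R2 -> R) (n : nat) (x : R2)
  : T -> R := fun t => Order.max (X n x t) (Z n x t `^ (alpha x)^-1).

End Defs.

From HB Require Import structures.
From mathcomp Require Import all_boot all_order all_algebra.
From mathcomp Require Import all_classical all_reals all_analysis.
From mathcomp Require Import ring lra.
Set Implicit Arguments. Unset Strict Implicit. Unset Printing Implicit Defensive.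
Import Order.TTheory GRing.Theory Num.Theory.
Import numFieldNormedType.Exports.
Local Open Scope classical_set_scope.
Local Open Scope ring_scope.

(* Fix the sites (n, x) and (m, x'), a level y, and write A, B (resp. A', B')
   for the events {X > y}, {Z^(1/alpha) > y} at (n, x) (resp. at (m, x')).
   By independence of X and Z, P(Y_n(x) > y) = p + q - p q with p = P(A),
   q = P(B), and the joint exceedance N = P((A' \/ B') /\ (A \/ B)) is
   squeezed between J + K - p q and J + K + p q + P(B') p, where J = P(A /\ A')
   and K = P(B /\ B').  With unit Frechet marginals p ~ 1/y and q ~ y^-alpha(x),
   so the dominant component of Y_n(x) is decided by comparing alpha(x) with 1:
   the tail ratio N / (p + q - p q) tends to lim J/p if alpha(x) > 1, to
   lim K/q if alpha(x) < 1 and to the mean of both if alpha(x) = 1.  For r > 0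
   the fields Z_n and Z_(n+r) are independent, so lim K/q = 0. *)

Section SandwichLimits.
Context {R : realType}.
Implicit Types f g h : R -> R.

Lemma cvg0_dominated f g : (\forall y \near +oo, `|f y| <= g y) ->
  g y @[y --> +oo] --> 0 -> f y @[y --> +oo] --> 0.
Proof.
move=> fg g0; apply: (@squeeze_cvgr _ _ _ _ (fun y => - g y) g).
- near=> y; rewrite -ler_norml; exact: (near fg y).
- by rewrite -oppr0; apply: cvgN.
- exact: g0.
Unshelve. all: end_near. Qed.

Lemma cvgD3_0 f g h : f y @[y --> +oo] --> 0 -> g y @[y --> +oo] --> 0 ->
  h y @[y --> +oo] --> 0 -> (f y + g y + h y) @[y --> +oo] --> (0 : R).
Proof. by move=> *; rewrite -(addr0 0) -{1}(addr0 0); apply: cvgD => //; apply: cvgD. Qed.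

Lemma cvg_div_leading (N D w d : R -> R) (c L : R) : c != 0 ->
  (\forall y \near +oo, 0 < w y /\ D y = w y * (c + d y)) ->
  d y @[y --> +oo] --> 0 -> (N y / w y) @[y --> +oo] --> L ->
  (N y / D y) @[y --> +oo] --> L / c.
Proof.
move=> c0 HD d0 NL.
have cd : (c + d y) @[y --> +oo] --> c.
  by rewrite -[X in _ --> X]addr0; apply: cvgD => //; exact: cvg_cst.
apply: cvg_trans _ (cvgM NL (cvgV c0 cd)).
apply: near_eq_cvg; near=> y.
have [w0 ->] : 0 < w y /\ D y = w y * (c + d y) by near: y.
by rewrite /= invfM mulrA.
Unshelve. all: end_near. Qed.

Lemma norm_div_le (a b p : R) : 0 < p -> `|a| <= b * p -> `|a / p| <= b.
Proof. by move=> p0 h; rewrite normrM normfV (gtr0_norm p0) ler_pdivrMr. Qed.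

(* The eventual bounds relating the tails p, q of the two components of a
   maximum at the first site, the tail q' of the second component at the
   second site, the component-wise joint exceedances J, K and the joint
   exceedance N of the maxima. *)
Definition tail_sandwich (p q q' J K N : R -> R) :=
  \forall y \near +oo, 0 < p y /\ 0 < q y /\ 0 <= q' y <= 1 /\
     0 <= J y <= p y /\ 0 <= K y <= q y /\
     J y + K y - p y * q y <= N y <= J y + K y + p y * q y + q' y * p y.

Lemma sandwich_cvg_first (p q q' J K N : R -> R) (Lj : R) :
  tail_sandwich p q q' J K N ->
  q y @[y --> +oo] --> 0 -> q' y @[y --> +oo] --> 0 ->
  (q y / p y) @[y --> +oo] --> 0 -> (J y / p y) @[y --> +oo] --> Lj ->
  (N y / (p y + q y - p y * q y)) @[y --> +oo] --> Lj.
Proof.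
move=> H Hq Hq' Hqp HJ.
rewrite -[Lj]divr1; apply: (cvg_div_leading (w := p) (d := fun y => q y / p y - q y)) => //.
- near=> y; have /(_ _)[//|p0 _] := near H y.
  split => //; field; exact: lt0r_neq0.
- by rewrite -(subr0 0); apply: cvgB.
have err : ((N y - J y) / p y) @[y --> +oo] --> 0.
  apply: (cvg0_dominated (g := fun y => q y / p y + q y + q' y)); last exact: cvgD3_0.
  near=> y; have /(_ _)[//|p0 [q0 [/andP[q'0 q'1] [/andP[J0 Jp] [/andP[K0 Kq] /andP[N1 N2]]]]]] := near H y.
  apply: norm_div_le => //; rewrite ler_norml !mulrDl mulfVK ?lt0r_neq0 //.
  by apply/andP; split; nra.
rewrite -[Lj]addr0; apply: cvg_trans _ (cvgD HJ err).
apply: near_eq_cvg; near=> y => /=.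
by rewrite -mulrDl addrC subrK.
Unshelve. all: end_near. Qed.

Lemma sandwich_cvg_balanced (p q q' J K N : R -> R) (Lj Lk : R) :
  tail_sandwich p q q' J K N -> (\forall y \near +oo, q y = p y) ->
  p y @[y --> +oo] --> 0 -> q' y @[y --> +oo] --> 0 ->
  (J y / p y) @[y --> +oo] --> Lj -> (K y / q y) @[y --> +oo] --> Lk ->
  (N y / (p y + q y - p y * q y)) @[y --> +oo] --> (Lj + Lk) / 2.
Proof.
move=> H Hpq Hp Hq' HJ HK.
apply: (cvg_div_leading (w := p) (d := fun y => - p y)) => //.
- near=> y; have /(_ _)[//|p0 _] := near H y.
  have -> : q y = p y by near: y.
  split => //; ring.
- by rewrite -oppr0; apply: cvgN.
have err : ((N y - J y - K y) / p y) @[y --> +oo] --> 0.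
  apply: (cvg0_dominated (g := fun y => q y + q' y)).
    near=> y; have /(_ _)[//|p0 [q0 [/andP[q'0 q'1] [/andP[J0 Jp] [/andP[K0 Kq] /andP[N1 N2]]]]]] := near H y.
    by apply: norm_div_le => //; rewrite ler_norml; apply/andP; split; nra.
  rewrite -(addr0 0); apply: cvgD => //; apply: cvg_trans _ Hp.
  by apply: near_eq_cvg; apply: filterS Hpq => y ->.
rewrite -[Lj + Lk]addr0; apply: cvg_trans _ (cvgD (cvgD HJ HK) err).
apply: near_eq_cvg; near=> y; rewrite !fctE.
have -> : q y = p y by near: y.
rewrite -!mulrDl; congr (_ / _); ring.
Unshelve. all: end_near. Qed.

Lemma sandwich_cvg_second (p q q' J K N : R -> R) (Lk : R) :
  tail_sandwich p q q' J K N -> p y @[y --> +oo] --> 0 ->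
  (p y / q y) @[y --> +oo] --> 0 -> (K y / q y) @[y --> +oo] --> Lk ->
  (N y / (p y + q y - p y * q y)) @[y --> +oo] --> Lk.
Proof.
move=> H Hp Hpq HK.
rewrite -[Lk]divr1; apply: (cvg_div_leading (w := q) (d := fun y => p y / q y - p y)) => //.
- near=> y; have /(_ _)[//|_ [q0 _]] := near H y.
  split => //; field; exact: lt0r_neq0.
- by rewrite -(subr0 0); apply: cvgB.
have err : ((N y - K y) / q y) @[y --> +oo] --> 0.
  apply: (cvg0_dominated (g := fun y => p y / q y + p y / q y + p y)); last exact: cvgD3_0.
  near=> y; have /(_ _)[//|p0 [q0 [/andP[q'0 q'1] [/andP[J0 Jp] [/andP[K0 Kq] /andP[N1 N2]]]]]] := near H y.
  apply: norm_div_le => //; rewrite ler_norml !mulrDl mulfVK ?lt0r_neq0 //.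
  by apply/andP; split; nra.
rewrite -[Lk]addr0; apply: cvg_trans _ (cvgD HK err).
apply: near_eq_cvg; near=> y => /=.
by rewrite -mulrDl addrC subrK.
Unshelve. all: end_near. Qed.

End SandwichLimits.

Section FrechetTail.
Context {R : realType}.

Lemma powR_cvgy (a : R) : 0 < a -> (y `^ a) @[y --> +oo] --> +oo.
Proof.
move=> a0; apply/cvgryPge => M.
have [M0|M0] := leP M 0.
  by near=> y; exact: le_trans M0 (powR_ge0 _ _).
near=> y.
have -> : M = (M `^ a^-1) `^ a.
  by rewrite -powRrM mulVf ?lt0r_neq0// powRr1 // ltW.
have y0 : 0 <= y by near: y; apply: nbhs_pinfty_ge; rewrite num_real.
have yM : M `^ a^-1 <= y by near: y; apply: nbhs_pinfty_ge; rewrite num_real.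
by apply: ge0_ler_powR; rewrite ?nnegrE ?powR_ge0 ?ltW.
Unshelve. all: end_near. Qed.

Lemma powRV_cvg0 (a : R) : 0 < a -> ((y `^ a)^-1) @[y --> +oo] --> 0.
Proof.
move=> a0; apply/(@gtr0_cvgV0 _ _ _ _ (fun y => y `^ a)); last exact: powR_cvgy.
near=> y; apply: powR_gt0.
by near: y; apply: nbhs_pinfty_gt; rewrite num_real.
Unshelve. all: end_near. Qed.

Lemma invr_cvgy0 : (y^-1) @[y --> +oo] --> (0 : R).
Proof.
apply: cvg_trans _ (powRV_cvg0 ltr01); apply: near_eq_cvg; near=> y.
have y0 : 0 <= y by near: y; apply: nbhs_pinfty_ge; rewrite num_real.
by rewrite powRr1.
Unshelve. all: end_near. Qed.

(* The tail of the unit Frechet law: P(F > c) = frechet_tail (c^-1). *)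
Definition frechet_tail (u : R) := 1 - expR (- u).

(* frechet_tail u lies between u / (1 + u) and u, so it is equivalent to u
   as u -> 0. *)
Lemma frechet_tail_le (u : R) : frechet_tail u <= u.
Proof. have := expR_ge1Dx (- u); rewrite /frechet_tail; lra. Qed.

Lemma frechet_tail_ge (u : R) : 0 <= u -> u / (1 + u) <= frechet_tail u.
Proof.
move=> u0; rewrite /frechet_tail expRN.
have u1 : 0 < 1 + u by lra.
have hi : (expR u)^-1 <= (1 + u)^-1 by rewrite lef_pV2 ?posrE ?expR_gt0 ?expR_ge1Dx.
have -> : u / (1 + u) = 1 - (1 + u)^-1 by field; lra.
lra.
Qed.

Lemma frechet_tail_gt0 (u : R) : 0 < u -> 0 < frechet_tail u.
Proof.
move=> u0; apply: lt_le_trans (frechet_tail_ge (ltW u0)).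
by rewrite divr_gt0 // ltr_wpDl.
Qed.

Lemma frechet_tail_ge0 (u : R) : 0 <= u -> 0 <= frechet_tail u.
Proof.
by move=> u0; apply: le_trans (frechet_tail_ge u0); rewrite divr_ge0 // addr_ge0.
Qed.

Lemma frechet_tail_powRV_cvg0 (a : R) : 0 < a ->
  frechet_tail ((y `^ a)^-1) @[y --> +oo] --> 0.
Proof.
move=> a0; apply: (cvg0_dominated _ (powRV_cvg0 a0)); near=> y.
have v0 : 0 <= (y `^ a)^-1 by rewrite invr_ge0 powR_ge0.
by rewrite ger0_norm ?frechet_tail_ge0 // frechet_tail_le.
Unshelve. all: end_near. Qed.

Lemma frechet_tail_invr_cvg0 : frechet_tail (y^-1) @[y --> +oo] --> (0 : R).
Proof.
apply: (cvg0_dominated _ invr_cvgy0); near=> y.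
have y0 : 0 < y by near: y; apply: nbhs_pinfty_gt; rewrite num_real.
by rewrite ger0_norm ?frechet_tail_le // frechet_tail_ge0 // invr_ge0 ltW.
Unshelve. all: end_near. Qed.

Lemma frechet_tail_ratio_lt1 (a : R) : 0 < a -> a < 1 ->
  (frechet_tail (y^-1) / frechet_tail ((y `^ a)^-1)) @[y --> +oo] --> 0.
Proof.
move=> a0 a1.
apply: (cvg0_dominated (g := fun y => (y `^ (1 - a))^-1 + y^-1)); last first.
  by rewrite -(addr0 0); apply: cvgD; [apply: powRV_cvg0; lra|exact: invr_cvgy0].
near=> y.
have y0 : 0 < y by near: y; apply: nbhs_pinfty_gt; rewrite num_real.
have -> : (y `^ (1 - a))^-1 = y `^ a / y.
  by rewrite powRB ?lt0r_neq0 ?implybT // powRr1 ?ltW // invf_div.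
set w := y `^ a.
have w0 : 0 < w by rewrite /w powR_gt0.
have v0 : 0 < w^-1 by rewrite invr_gt0.
have Gw0 := frechet_tail_gt0 v0.
have Gy0 : 0 <= frechet_tail (y^-1) by rewrite frechet_tail_ge0 // invr_ge0 ltW.
have b0 : 0 <= w / y + y^-1 by rewrite addr_ge0 // ?divr_ge0 ?invr_ge0 // ltW.
rewrite ger0_norm; last by rewrite divr_ge0 // ltW.
rewrite ler_pdivrMr //.
apply: le_trans (frechet_tail_le _) _.
apply: le_trans (ler_wpM2l b0 (frechet_tail_ge (ltW v0))).
by rewrite le_eqVlt; apply/orP; left; apply/eqP; field; rewrite !lt0r_neq0 //; lra.
Unshelve. all: end_near. Qed.

Lemma frechet_tail_ratio_gt1 (a : R) : 1 < a ->
  (frechet_tail ((y `^ a)^-1) / frechet_tail (y^-1)) @[y --> +oo] --> 0.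
Proof.
move=> a1.
apply: (cvg0_dominated (g := fun y => (y `^ (a - 1))^-1 + (y `^ a)^-1)); last first.
  by rewrite -(addr0 0); apply: cvgD; apply: powRV_cvg0; lra.
near=> y.
have y0 : 0 < y by near: y; apply: nbhs_pinfty_gt; rewrite num_real.
rewrite powRB; last by rewrite lt0r_neq0 ?implybT.
rewrite powRr1; last exact: ltW.
set w := y `^ a.
have w0 : 0 < w by rewrite /w powR_gt0.
have yi0 : 0 < y^-1 by rewrite invr_gt0.
have Gy0 := frechet_tail_gt0 yi0.
have Gw0 : 0 <= frechet_tail (w^-1) by rewrite frechet_tail_ge0 // invr_ge0 ltW.
have b0 : 0 <= (w / y)^-1 + w^-1 by rewrite addr_ge0 // ?invr_ge0 ?divr_ge0 // ltW.
rewrite ger0_norm; last by rewrite divr_ge0 // ltW.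
rewrite ler_pdivrMr //.
apply: le_trans (frechet_tail_le _) _.
apply: le_trans (ler_wpM2l b0 (frechet_tail_ge (ltW yi0))).
by rewrite le_eqVlt; apply/orP; left; apply/eqP; field; rewrite !lt0r_neq0 //; lra.
Unshelve. all: end_near. Qed.

End FrechetTail.

Section ExceedanceEvents.
Context {d : measure_display} {T : measurableType d} {R : realType}.
Variable P : probability T R.

Definition mu (A : set T) := fine (P A).

Lemma muE A : measurable A -> P A = (mu A)%:E.
Proof. by move=> mA; rewrite /mu fineK // fin_num_measure. Qed.

Lemma mu_ge0 A : 0 <= mu A.
Proof. exact: fine_ge0 (measure_ge0 P A). Qed.

Lemma mu_le1 A : measurable A -> mu A <= 1.
Proof. by move=> mA; rewrite -lee_fin -muE //; exact: probability_le1. Qed.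

Lemma mu_le A B : measurable A -> measurable B -> A `<=` B -> mu A <= mu B.
Proof. by move=> mA mB AB; rewrite -lee_fin -!muE //; apply: le_measure; rewrite ?inE. Qed.

Lemma muU A B : measurable A -> measurable B ->
  mu (A `|` B) = mu A + mu B - mu (A `&` B).
Proof.
move=> mA mB; apply/EFin_inj; rewrite EFinB EFinD -!muE //;
  try by [apply: measurableU | apply: measurableI].
rewrite measureUfinl //; exact: (le_lt_trans (probability_le1 P mA) (ltry 1)).
Qed.

Lemma muU_le A B : measurable A -> measurable B -> mu (A `|` B) <= mu A + mu B.
Proof. by move=> mA mB; rewrite muU // lerBlDr lerDl mu_ge0. Qed.

Lemma muC A : measurable A -> mu (~` A) = 1 - mu A.
Proof.
move=> mA; apply/EFin_inj; rewrite EFinB -!muE //; last exact: measurableC.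
exact: probability_setC.
Qed.

Lemma mu_union_meet_ge A B A' B' :
  measurable A -> measurable B -> measurable A' -> measurable B' ->
  mu (A' `&` A) + mu (B' `&` B) - mu (A `&` B) <= mu ((A' `|` B') `&` (A `|` B)).
Proof.
move=> mA mB mA' mB'.
apply: le_trans (_ : mu ((A' `&` A) `|` (B' `&` B)) <= _).
  rewrite muU; try exact: measurableI.
  rewrite lerD2l lerN2; apply: mu_le; try by do ![apply: measurableI].
  by move=> t [[_ ?] [_ ?]].
apply: mu_le; first (by apply: measurableU; exact: measurableI);
  first (by apply: measurableI; exact: measurableU).
by move=> t [[? ?]|[? ?]]; split; [left|left|right|right].
Qed.

Lemma mu_union_meet_le A B A' B' :
  measurable A -> measurable B -> measurable A' -> measurable B' ->
  mu ((A' `|` B') `&` (A `|` B)) <=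
  mu (A' `&` A) + mu (B' `&` B) + mu (A' `&` B) + mu (B' `&` A).
Proof.
move=> mA mB mA' mB'.
have m1 : measurable ((A' `&` A) `|` (B' `&` B)) by apply: measurableU; exact: measurableI.
have m2 : measurable ((A' `&` B) `|` (B' `&` A)) by apply: measurableU; exact: measurableI.
apply: le_trans (_ : mu (((A' `&` A) `|` (B' `&` B)) `|` ((A' `&` B) `|` (B' `&` A))) <= _).
  apply: mu_le; [by apply: measurableI; exact: measurableU|exact: measurableU|].
  move=> t [[?|?] [?|?]]; [left; left| right; left| right; right| left; right]; by split.
have := muU_le m1 m2.
have := muU_le (measurableI _ _ mA' mA) (measurableI _ _ mB' mB).
have := muU_le (measurableI _ _ mA' mB) (measurableI _ _ mB' mA).
lra.
Qed.

Lemma measurable_gt (f : T -> R) (c : R) :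
  measurable_fun setT f -> measurable [set t | c < f t].
Proof.
move=> mf; have := mf measurableT _ (measurable_itv `]c, +oo[); rewrite setTI.
by congr measurable; apply/seteqP; split=> t /=; rewrite in_itv /= andbT.
Qed.

Lemma measurable_le (f : T -> R) (c : R) :
  measurable_fun setT f -> measurable [set t | f t <= c].
Proof.
move=> mf; have := mf measurableT _ (measurable_itv `]-oo, c]); rewrite setTI.
by congr measurable; apply/seteqP; split=> t /=; rewrite in_itv.
Qed.

Lemma preimage_itv_gtE (f : T -> R) (c : R) :
  f @^-1` `]c, +oo[%classic `&` setT = [set t | c < f t].
Proof. by rewrite setIT; apply/seteqP; split => t /=; rewrite in_itv /= andbT. Qed.

Lemma mu_frechet_gt (F : T -> R) (c : R) : measurable_fun setT F ->
  (forall z, 0 < z -> P [set t | F t <= z] = (expR (- z^-1))%:E) ->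
  0 < c -> mu [set t | c < F t] = frechet_tail (c^-1).
Proof.
move=> mF frF c0.
have -> : [set t | c < F t] = ~` [set t | F t <= c].
  by apply/seteqP; split => t /=; rewrite ltNge => /negP.
by rewrite muC; [rewrite /mu frF|exact: measurable_le].
Qed.

End ExceedanceEvents.

Section PMaxModel.
Context {d : measure_display} {T : measurableType d} {R : realType}.
Variables (P : probability T R) (X Z : nat -> @R2 R -> T -> R) (alpha : @R2 R -> R).
Hypotheses (mX : forall n x, measurable_fun setT (X n x))
  (mZ : forall n x, measurable_fun setT (Z n x))
  (frX : frechet_marginals P X) (frZ : frechet_marginals P Z)
  (iidZ : iid_fields P Z) (indXZ : indep_seqs P X Z)
  (alpha_pos : forall x, 0 < alpha x).

Definition Zp m z := fun t => Z m z t `^ (alpha z)^-1.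

(* Above level 1, Z^(1/alpha) exceeds y iff Z exceeds y^alpha.  (The level
   must be at least 1 because powR sends negative arguments to 1.) *)
Lemma Zp_gtE m z y : 1 <= y ->
  [set t | y < Zp m z t] = [set t | y `^ alpha z < Z m z t].
Proof.
move=> y1; have a0 := alpha_pos z; have b0 : 0 < (alpha z)^-1 by rewrite invr_gt0.
have y0 : 0 <= y by lra.
have ya0 := powR_ge0 y (alpha z).
apply/seteqP; split => t /=; rewrite /Zp; case: (ltrgtP (Z m z t) 0) => [Zn|Zpos|->].
- by rewrite /powR (negbTE (ltr0_neq0 Zn)) ln0 ?ltW // mulr0 expR0; lra.
- move=> /(gt0_ltr_powR a0); rewrite -powRrM mulVf ?lt0r_neq0 // powRr1 ?ltW //.
  by apply; rewrite nnegrE // powR_ge0.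
- by rewrite powR0 ?lt0r_neq0 //; lra.
- by lra.
- move=> /(gt0_ltr_powR b0); rewrite -powRrM mulfV ?lt0r_neq0 // powRr1 //.
  by apply; rewrite nnegrE // ltW.
- by lra.
Qed.

Lemma measurable_Zp_gt m z y : 1 <= y -> measurable [set t | y < Zp m z t].
Proof. by move=> y1; rewrite Zp_gtE //; exact: measurable_gt. Qed.

Lemma mu_X_gt m z y : (0 < m)%N -> 0 < y ->
  mu P [set t | y < X m z t] = frechet_tail (y^-1).
Proof. by move=> m0 y0; apply: mu_frechet_gt => // c c0; exact: frX. Qed.

Lemma mu_Zp_gt m z y : (0 < m)%N -> 1 <= y ->
  mu P [set t | y < Zp m z t] = frechet_tail ((y `^ alpha z)^-1).
Proof.
move=> m0 y1; rewrite Zp_gtE //; apply: mu_frechet_gt => //; last first.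
  by rewrite powR_gt0 //; lra.
by move=> c c0; exact: frZ.
Qed.

Lemma tail_X_near m z : (0 < m)%N ->
  \forall y \near +oo, mu P [set t | y < X m z t] = frechet_tail (y^-1).
Proof.
move=> m0; near=> y; apply: mu_X_gt => //.
Unshelve. all: end_near. Qed.

Lemma tail_Zp_near m z : (0 < m)%N ->
  \forall y \near +oo, mu P [set t | y < Zp m z t] = frechet_tail ((y `^ alpha z)^-1).
Proof.
move=> m0; near=> y; apply: mu_Zp_gt => //.
Unshelve. all: end_near. Qed.

Lemma tail_X_cvg0 m z : (0 < m)%N -> mu P [set t | y < X m z t] @[y --> +oo] --> 0.
Proof.
move=> m0; apply: cvg_trans _ frechet_tail_invr_cvg0; apply: near_eq_cvg.
by apply: filterS (tail_X_near z m0) => y ->.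
Qed.

Lemma tail_Zp_cvg0 m z : (0 < m)%N -> mu P [set t | y < Zp m z t] @[y --> +oo] --> 0.
Proof.
move=> m0; apply: cvg_trans _ (frechet_tail_powRV_cvg0 (alpha_pos z)); apply: near_eq_cvg.
by apply: filterS (tail_Zp_near z m0) => y ->.
Qed.

Lemma mu_XZ_indep a u b v c1 c2 : (0 < a)%N -> (0 < b)%N ->
  mu P ([set t | c1 < X a u t] `&` [set t | c2 < Z b v t]) =
  mu P [set t | c1 < X a u t] * mu P [set t | c2 < Z b v t].
Proof.
move=> a0 b0.
pose ss := fun j : bool => if j then [:: ((a, u), `]c1, +oo[%classic)]
                           else [:: ((b, v), `]c2, +oo[%classic)].
have := @indXZ [:: true; false] ss erefl.
rewrite /= /cyl /= /fam /= !preimage_itv_gtE setIT mule1.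
move=> indep; rewrite /mu indep; first by rewrite fineM // fin_num_measure //; apply: measurable_gt.
move=> j; rewrite !inE => /orP[] /eqP -> /=;
  by do !split => //; exact: measurable_itv.
Qed.

Lemma mu_ZZ_indep a u b v c1 c2 : (0 < a)%N -> (0 < b)%N -> a != b ->
  mu P ([set t | c1 < Z a u t] `&` [set t | c2 < Z b v t]) =
  mu P [set t | c1 < Z a u t] * mu P [set t | c2 < Z b v t].
Proof.
move=> a0 b0 ab; have ba : b != a by rewrite eq_sym.
pose ss := fun j : nat => if j == a then [:: (u, `]c1, +oo[%classic)]
                           else [:: (v, `]c2, +oo[%classic)].
have uq : uniq [:: a; b] by rewrite /= inE andbT eq_sym.
have := @iidZ.1 [:: a; b] ss uq.
rewrite /= /cyl /= /ss eqxx (negbTE ba) /= !preimage_itv_gtE setIT mule1.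
move=> indep; rewrite /mu indep; first by rewrite fineM // fin_num_measure //; apply: measurable_gt.
move=> j; rewrite !inE => /orP[] /eqP -> /=; rewrite ?eqxx ?(negbTE ba) /=;
  by do !split => //; exact: measurable_itv.
Qed.

Lemma mu_XZp_indep a u b v y : (0 < a)%N -> (0 < b)%N -> 1 <= y ->
  mu P ([set t | y < X a u t] `&` [set t | y < Zp b v t]) =
  mu P [set t | y < X a u t] * mu P [set t | y < Zp b v t].
Proof. by move=> a0 b0 y1; rewrite Zp_gtE //; apply: mu_XZ_indep. Qed.

Lemma mu_ZpZp_indep a u b v y : (0 < a)%N -> (0 < b)%N -> a != b -> 1 <= y ->
  mu P ([set t | y < Zp a u t] `&` [set t | y < Zp b v t]) =
  mu P [set t | y < Zp a u t] * mu P [set t | y < Zp b v t].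
Proof. by move=> a0 b0 ab y1; rewrite !Zp_gtE //; apply: mu_ZZ_indep. Qed.

Lemma pmax_gtE m z y : [set t | y < pmax X Z alpha m z t] =
  [set t | y < X m z t] `|` [set t | y < Zp m z t].
Proof. by apply/seteqP; split => t /=; rewrite /pmax lt_max => /orP. Qed.

Lemma tail_sandwich_pmax n m x x' : (0 < n)%N -> (0 < m)%N ->
  tail_sandwich (fun y => mu P [set t | y < X n x t]) (fun y => mu P [set t | y < Zp n x t])
    (fun y => mu P [set t | y < Zp m x' t])
    (fun y => mu P ([set t | y < X m x' t] `&` [set t | y < X n x t]))
    (fun y => mu P ([set t | y < Zp m x' t] `&` [set t | y < Zp n x t]))
    (fun y => mu P ([set t | y < pmax X Z alpha m x' t] `&` [set t | y < pmax X Z alpha n x t])).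
Proof.
move=> n0 m0; near=> y.
have y1 : 1 <= y by near: y; apply: nbhs_pinfty_ge; rewrite num_real.
have y0 : 0 < y by lra.
rewrite !pmax_gtE.
set A := [set t | y < X n x t]; set A' := [set t | y < X m x' t].
set B := [set t | y < Zp n x t]; set B' := [set t | y < Zp m x' t].
have mA : measurable A by exact: measurable_gt.
have mA' : measurable A' by exact: measurable_gt.
have mB : measurable B by exact: measurable_Zp_gt.
have mB' : measurable B' by exact: measurable_Zp_gt.
have AA' : mu P A' = mu P A by rewrite /A /A' !mu_X_gt.
have AB : mu P (A `&` B) = mu P A * mu P B by exact: mu_XZp_indep.
have A'B : mu P (A' `&` B) = mu P A * mu P B by rewrite -AA'; exact: mu_XZp_indep.
have B'A : mu P (B' `&` A) = mu P B' * mu P A by rewrite setIC mu_XZp_indep // mulrC.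
have Ilow := mu_union_meet_ge P mA mB mA' mB'.
have Iup := mu_union_meet_le P mA mB mA' mB'.
do !split.
- by rewrite /A mu_X_gt // frechet_tail_gt0 // invr_gt0.
- by rewrite /B mu_Zp_gt // frechet_tail_gt0 // invr_gt0 powR_gt0.
- by rewrite mu_ge0 mu_le1.
- by rewrite mu_ge0 /=; apply: mu_le; [exact: measurableI | by [] | exact: subIsetr].
- by rewrite mu_ge0 /=; apply: mu_le; [exact: measurableI | by [] | exact: subIsetr].
- by apply/andP; split; lra.
Unshelve. all: end_near. Qed.

Lemma tail_ratio_pmax_cvg n m x x' (L : R) : (0 < n)%N ->
  (mu P ([set t | y < pmax X Z alpha m x' t] `&` [set t | y < pmax X Z alpha n x t]) /
    (mu P [set t | y < X n x t] + mu P [set t | y < Zp n x t] -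
     mu P [set t | y < X n x t] * mu P [set t | y < Zp n x t])) @[y --> +oo] --> L ->
  tail_ratio P (pmax X Z alpha n x) (pmax X Z alpha m x') y @[y --> +oo] --> L.
Proof.
move=> n0 lim_quot; apply: cvg_trans _ lim_quot; apply: near_eq_cvg; near=> y.
have y1 : 1 <= y by near: y; apply: nbhs_pinfty_ge; rewrite num_real.
rewrite -mu_XZp_indep // -muU; last exact: measurable_Zp_gt; last exact: measurable_gt.
by rewrite -pmax_gtE.
Unshelve. all: end_near. Qed.

Lemma tail_ratio_pmax_gt1 n m x x' (Lj : R) : (0 < n)%N -> (0 < m)%N -> 1 < alpha x ->
  tail_ratio P (X n x) (X m x') y @[y --> +oo] --> Lj ->
  tail_ratio P (pmax X Z alpha n x) (pmax X Z alpha m x') y @[y --> +oo] --> Lj.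
Proof.
move=> n0 m0 a1 HJ; apply: tail_ratio_pmax_cvg => //.
have qp : (mu P [set t | y < Zp n x t] / mu P [set t | y < X n x t]) @[y --> +oo] --> 0.
  apply: cvg_trans _ (frechet_tail_ratio_gt1 a1); apply: near_eq_cvg; near=> y.
  rewrite (near (tail_X_near x n0) y) ?(near (tail_Zp_near x n0) y) //.
exact: (sandwich_cvg_first (tail_sandwich_pmax x x' n0 m0)
  (tail_Zp_cvg0 x n0) (tail_Zp_cvg0 x' m0) qp HJ).
Unshelve. all: end_near. Qed.

Lemma tail_ratio_pmax_eq1 n m x x' (Lj Lk : R) : (0 < n)%N -> (0 < m)%N -> alpha x = 1 ->
  tail_ratio P (X n x) (X m x') y @[y --> +oo] --> Lj ->
  tail_ratio P (Zp n x) (Zp m x') y @[y --> +oo] --> Lk ->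
  tail_ratio P (pmax X Z alpha n x) (pmax X Z alpha m x') y @[y --> +oo] --> (Lj + Lk) / 2.
Proof.
move=> n0 m0 a1 HJ HK; apply: tail_ratio_pmax_cvg => //.
apply: (sandwich_cvg_balanced (tail_sandwich_pmax x x' n0 m0) _
  (tail_X_cvg0 x n0) (tail_Zp_cvg0 x' m0) HJ HK).
near=> y.
have y0 : 0 <= y by near: y; apply: nbhs_pinfty_ge; rewrite num_real.
rewrite (near (tail_X_near x n0) y) ?(near (tail_Zp_near x n0) y) //.
by rewrite a1 powRr1.
Unshelve. all: end_near. Qed.

Lemma tail_ratio_pmax_lt1 n m x x' (Lk : R) : (0 < n)%N -> (0 < m)%N -> alpha x < 1 ->
  tail_ratio P (Zp n x) (Zp m x') y @[y --> +oo] --> Lk ->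
  tail_ratio P (pmax X Z alpha n x) (pmax X Z alpha m x') y @[y --> +oo] --> Lk.
Proof.
move=> n0 m0 a1 HK; apply: tail_ratio_pmax_cvg => //.
have pq : (mu P [set t | y < X n x t] / mu P [set t | y < Zp n x t]) @[y --> +oo] --> 0.
  apply: cvg_trans _ (frechet_tail_ratio_lt1 (alpha_pos x) a1); apply: near_eq_cvg.
  near=> y; rewrite (near (tail_X_near x n0) y) ?(near (tail_Zp_near x n0) y) //.
exact: (sandwich_cvg_second (tail_sandwich_pmax x x' n0 m0) (tail_X_cvg0 x n0) pq HK).
Unshelve. all: end_near. Qed.

Lemma tail_ratio_Zp_indep n m x x' : (0 < n)%N -> (0 < m)%N -> m != n ->
  tail_ratio P (Zp n x) (Zp m x') y @[y --> +oo] --> 0.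
Proof.
move=> n0 m0 mn; apply: cvg_trans _ (tail_Zp_cvg0 x' m0); apply: near_eq_cvg; near=> y.
have y1 : 1 <= y by near: y; apply: nbhs_pinfty_ge; rewrite num_real.
have q0 : 0 < mu P [set t | y < Zp n x t].
  by rewrite mu_Zp_gt // frechet_tail_gt0 // invr_gt0 powR_gt0 //; lra.
rewrite /tail_ratio -/(mu P _) -/(mu P _) mu_ZpZp_indep //.
by rewrite mulfK // lt0r_neq0.
Unshelve. all: end_near. Qed.

End PMaxModel.

Theorem mainTheorem1 (d : measure_display) (T : measurableType d) (R : realType)
  (P : probability T R) (X Z : nat -> R2 -> T -> R) (alpha : R2 -> R)
  (mX : forall n x, measurable_fun setT (X n x))
  (mZ : forall n x, measurable_fun setT (Z n x))
  (frX : frechet_marginals P X) (statX : stationary_seq P X)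
  (frZ : frechet_marginals P Z) (iidZ : iid_fields P Z)
  (indXZ : indep_seqs P X Z)
  (alpha_pos : forall x, 0 < alpha x)
  (n r : nat) (x x' : R2) (n_ge1 : (0 < n)%N) :
  let Y := pmax X Z alpha in
  let Zp := fun m y => (fun t => Z m y t `^ (alpha y)^-1) in
  ((0 < r)%N ->
     (alpha x < 1 -> tdc_exists P (Y n x) (Y (n + r)%N x') ->
        tdc P (Y n x) (Y (n + r)%N x') = 0) /\
     (alpha x = 1 -> tdc_exists P (Y n x) (Y (n + r)%N x') ->
        tdc_exists P (X n x) (X (n + r)%N x') ->
        tdc P (Y n x) (Y (n + r)%N x') = 2^-1 * tdc P (X n x) (X (n + r)%N x')) /\
     (1 < alpha x -> tdc_exists P (Y n x) (Y (n + r)%N x') ->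
        tdc_exists P (X n x) (X (n + r)%N x') ->
        tdc P (Y n x) (Y (n + r)%N x') = tdc P (X n x) (X (n + r)%N x'))) /\
  (r = 0%N -> x <> x' ->
     (alpha x < 1 -> tdc_exists P (Y n x) (Y n x') ->
        tdc_exists P (Zp n x) (Zp n x') ->
        tdc P (Y n x) (Y n x') = tdc P (Zp n x) (Zp n x')) /\
     (alpha x = 1 -> tdc_exists P (Y n x) (Y n x') ->
        tdc_exists P (X n x) (X n x') -> tdc_exists P (Zp n x) (Zp n x') ->
        tdc P (Y n x) (Y n x') =
          2^-1 * (tdc P (X n x) (X n x') + tdc P (Zp n x) (Zp n x'))) /\
     (1 < alpha x -> tdc_exists P (Y n x) (Y n x') ->
        tdc_exists P (X n x) (X n x') ->
        tdc P (Y n x) (Y n x') = tdc P (X n x) (X n x'))).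
Proof.
move=> Y Zp'.
have lt1 := tail_ratio_pmax_lt1 mX mZ frX frZ indXZ alpha_pos.
have eq1 := tail_ratio_pmax_eq1 mX mZ frX frZ indXZ alpha_pos.
have gt1 := tail_ratio_pmax_gt1 mX mZ frX frZ indXZ alpha_pos.
have nr0 : (0 < n + r)%N by rewrite addn_gt0 n_ge1.
split=> [r0 | r0 _].
-
  have nrn : (n + r)%N != n by rewrite -{2}(addn0 n) eqn_add2l -lt0n.
  have Z0 := tail_ratio_Zp_indep mZ frZ iidZ alpha_pos x x' n_ge1 nr0 nrn.
  split; [|split] => a1 _; [|move=> HJ..]; apply: cvg_lim => //.
  + exact: (lt1 _ _ _ _ _ n_ge1 nr0 a1 Z0).
  + by have := eq1 _ _ _ _ _ _ n_ge1 nr0 a1 HJ Z0; rewrite addr0 mulrC.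
  + exact: gt1.
-
  split; [|split] => a1 _ *; apply: cvg_lim => //.
  + exact: lt1.
  + by have := eq1 _ _ _ _ _ _ n_ge1 n_ge1 a1; rewrite mulrC; apply.
  + exact: gt1.
Qed.
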